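(* Let $K\subset\mathbb{R}^3$ be finite, let $M\subset\mathbb{R}^3$ with $K^{rc}\subset M$, let $p$ be a point in $M\setminus K$, and let $B$ be a $D$-prism for $(M,K,p)$. Then $K^{rc}\subset M\setminus B$.
   Context: A horizontal segment/line is one contained in a plane $\{z=c\}$; a vertical one is parallel to the $z$ axis. A function $f:\mathbb{R}^3\to\mathbb{R}$ is $2+1$-convex if its restriction to every horizontal and every vertical line is convex; for compact $S$, $S^{rc}=\{x: f(x)\le\sup_S f\text{ for every } 2+1\text{-convex } f\}$. For $M\subset\mathbb{R}^3$, $p\in M$ is an extremal point of $M$ if no relatively open horizontal or vertical segment contained in $M$ contains $p$. Let $K$ be finite, $M\supset K^{rc}$, and $p\in M$ an extremal point of $M$ with $p\notin K$. A $D$-prism for $(M,K,p)$ is the interior $B$ of a product $T\times H$, where $T$ is a (closed) triangle in a horizontal plane (identified with a triangle in $\mathbb{R}^2$) and $H$ is a vertical segment (identified with a compact interval in $\mathbb{R}$), such that: $p\in B$; $K\cap B=\emptyset$; and $M\cap\partial B$ is contained in the union of just one of the three closed vertical rectangular faces of $\partial B$ and just one of the two closed horizontal triangular faces of $\partial B$. *)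

From Stdlib Require Import Reals List.
Open Scope R_scope.

Definition point := (R * R * R)%type.
Definition px (q : point) : R := fst (fst q).
Definition py (q : point) : R := snd (fst q).
Definition pz (q : point) : R := snd q.

Definition convex_R (g : R -> R) : Prop :=
  forall s t l, 0 <= l <= 1 -> g (l * s + (1 - l) * t) <= l * g s + (1 - l) * g t.

Definition convex21 (f : point -> R) : Prop :=
  (forall x0 y0 c a b, convex_R (fun t => f (x0 + t * a, y0 + t * b, c))) /\
  (forall x0 y0 z0, convex_R (fun t => f (x0, y0, z0 + t))).

(* K^{rc} for a finite set K given as a list:
   x \in K^rc iff f x <= sup_K f = max_K f for every 2+1-convex f
   (for K empty, sup = -oo, so K^rc is empty, matching "exists k"). *)
Definition rc_hull (K : list point) (x : point) : Prop :=
  forall f, convex21 f -> exists k, In k K /\ f x <= f k.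

(* A prism T x H: T the triangle with vertices a, b, c in the horizontal
   plane (identified with R^2), H = [h1, h2]. *)
Record prism := Prism { va : R * R; vb : R * R; vc : R * R; h1 : R; h2 : R }.

Definition bary (P : prism) (x y l1 l2 l3 : R) : Prop :=
  l1 + l2 + l3 = 1 /\
  x = l1 * fst (va P) + l2 * fst (vb P) + l3 * fst (vc P) /\
  y = l1 * snd (va P) + l2 * snd (vb P) + l3 * snd (vc P).

Definition nondeg (P : prism) : Prop :=
  (fst (vb P) - fst (va P)) * (snd (vc P) - snd (va P))
  - (snd (vb P) - snd (va P)) * (fst (vc P) - fst (va P)) <> 0.

Definition prism_int (P : prism) (q : point) : Prop :=
  (exists l1 l2 l3, bary P (px q) (py q) l1 l2 l3 /\ 0 < l1 /\ 0 < l2 /\ 0 < l3) /\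
  h1 P < pz q < h2 P.

Definition prism_closed (P : prism) (q : point) : Prop :=
  (exists l1 l2 l3, bary P (px q) (py q) l1 l2 l3 /\ 0 <= l1 /\ 0 <= l2 /\ 0 <= l3) /\
  h1 P <= pz q <= h2 P.

Definition prism_bd (P : prism) (q : point) : Prop :=
  prism_closed P q /\ ~ prism_int P q.

(* the three closed vertical rectangular faces: face i is (edge opposite to
   vertex i) x H *)
Definition vface (P : prism) (i : nat) (q : point) : Prop :=
  (exists l1 l2 l3, bary P (px q) (py q) l1 l2 l3 /\ 0 <= l1 /\ 0 <= l2 /\ 0 <= l3 /\
     ((i = 0%nat /\ l1 = 0) \/ (i = 1%nat /\ l2 = 0) \/ (i = 2%nat /\ l3 = 0))) /\
  h1 P <= pz q <= h2 P.

Definition hface (P : prism) (top : bool) (q : point) : Prop :=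
  (exists l1 l2 l3, bary P (px q) (py q) l1 l2 l3 /\ 0 <= l1 /\ 0 <= l2 /\ 0 <= l3) /\
  pz q = (if top then h2 P else h1 P).

Definition D_prism (M : point -> Prop) (K : list point) (p : point) (P : prism) : Prop :=
  nondeg P /\
  prism_int P p /\
  (forall k, In k K -> ~ prism_int P k) /\
  exists (i : nat) (top : bool), (i < 3)%nat /\
    forall q, M q -> prism_bd P q -> vface P i q \/ hface P top q.

From Stdlib Require Import Reals List Lra Psatz Classical ClassicalDescription.
Open Scope R_scope.

(* Suppose [x] is in [K^rc] and in the open prism [B].  Let [l] be the barycentric
   coordinate vanishing on the vertical face allowed to meet [M], and [w] the height
   measured from the allowed horizontal face.  Then [g = l * w - c], with
   [c = l(x) w(x) / 2], is affine along horizontal and vertical lines, positive at [x],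
   and equal to [-c] on the part of the boundary of [B] that may meet [M ⊇ K^rc].
   Every other boundary point lies outside [K^rc], hence is separated from [K] by a
   2+1-convex function; by compactness of the boundary and lower semicontinuity of
   2+1-convex functions, finitely many of them combine into a 2+1-convex [h <= 0] on
   [K] with [g < h] on the boundary.  The function equal to [max g h] in [B] and to [h]
   outside is then 2+1-convex, because convexity along a line is a local property;
   it is [<= 0] on [K] but positive at [x], which contradicts [x ∈ K^rc]. *)

(** * Convex functions of one variable *)

(* [slope g u v <= slope g v w], cross-multiplied. *)
Definition slope_mono (g : R -> R) (u v w : R) : Prop :=
  (g v - g u) * (w - v) <= (g w - g v) * (v - u).

Definition convex_on (g : R -> R) (a b : R) : Prop :=
  forall u v w, a < u -> u < v -> v < w -> w < b -> slope_mono g u v w.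

Lemma convex_R_slope_mono g u v w :
  convex_R g -> u < v -> v < w -> slope_mono g u v w.
Proof.
  intros Hg Huv Hvw.
  set (l := (w - v) / (w - u)).
  assert (El : l * (w - u) = w - v) by (unfold l; field; lra).
  assert (Hl : 0 <= l <= 1) by (split; nra).
  specialize (Hg u w l Hl).
  replace (l * u + (1 - l) * w) with v in Hg by nra.
  assert (Hv : (w - u) * g v <= (w - v) * g u + (v - u) * g w).
  { replace ((w - v) * g u + (v - u) * g w) with ((w - u) * (l * g u + (1 - l) * g w))
      by (unfold l; field; lra).
    apply Rmult_le_compat_l; lra. }
  unfold slope_mono; nra.
Qed.

Lemma slope_mono_convex_R g :
  (forall u v w, u < v -> v < w -> slope_mono g u v w) -> convex_R g.
Proof.
  intros Hg s t l Hl.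
  set (v := l * s + (1 - l) * t).
  destruct (Req_dec l 0) as [->|Hl0].
  { unfold v; replace (0 * s + (1 - 0) * t) with t by ring; lra. }
  destruct (Req_dec l 1) as [->|Hl1].
  { unfold v; replace (1 * s + (1 - 1) * t) with s by ring; lra. }
  destruct (Rtotal_order s t) as [Hst|[<-|Hst]].
  - assert (Hs : s < v) by (unfold v; nra). assert (Ht : v < t) by (unfold v; nra).
    specialize (Hg s v t Hs Ht). unfold slope_mono in Hg.
    replace (t - v) with (l * (t - s)) in Hg by (unfold v; ring).
    replace (v - s) with ((1 - l) * (t - s)) in Hg by (unfold v; ring).
    assert (((g v - g s) * l - (g t - g v) * (1 - l)) * (t - s) <= 0) by nra.
    assert ((g v - g s) * l - (g t - g v) * (1 - l) <= 0) by nra.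
    nra.
  - unfold v; replace (l * s + (1 - l) * s) with s by ring; lra.
  - assert (Ht : t < v) by (unfold v; nra). assert (Hs : v < s) by (unfold v; nra).
    specialize (Hg t v s Ht Hs). unfold slope_mono in Hg.
    replace (s - v) with ((1 - l) * (s - t)) in Hg by (unfold v; ring).
    replace (v - t) with (l * (s - t)) in Hg by (unfold v; ring).
    assert (((g v - g t) * (1 - l) - (g s - g v) * l) * (s - t) <= 0) by nra.
    assert ((g v - g t) * (1 - l) - (g s - g v) * l <= 0) by nra.
    nra.
Qed.

Lemma cross_mul_trans a b c p q r :
  0 < q -> 0 <= p -> 0 <= r -> a * q <= b * p -> b * r <= c * q -> a * r <= c * p.
Proof.
  intros Hq Hp Hr H1 H2.
  assert (a * q * r <= b * p * r) by (apply Rmult_le_compat_r; auto).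
  assert (b * r * p <= c * q * p) by (apply Rmult_le_compat_r; auto).
  apply (Rmult_le_reg_l q); nra.
Qed.

Lemma slope_mono_split_r g u v m w : u < v -> v < m -> m < w ->
  slope_mono g u v m -> slope_mono g v m w -> slope_mono g u v w.
Proof.
  unfold slope_mono; intros Huv Hvm Hmw H1 H2.
  assert (H := cross_mul_trans (g v - g u) (g m - g v) (g w - g m) (v - u) (m - v) (w - m)
    ltac:(lra) ltac:(lra) ltac:(lra) H1 H2).
  lra.
Qed.

Lemma slope_mono_split_l g u m v w : u < m -> m < v -> v < w ->
  slope_mono g u m v -> slope_mono g m v w -> slope_mono g u v w.
Proof.
  unfold slope_mono; intros Hum Hmv Hvw H1 H2.
  assert (H := cross_mul_trans (g m - g u) (g v - g m) (g w - g v) (m - u) (v - m) (w - v)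
    ltac:(lra) ltac:(lra) ltac:(lra) H1 H2).
  lra.
Qed.

Lemma convex_on_weaken g a b a' b' :
  a <= a' -> b' <= b -> convex_on g a b -> convex_on g a' b'.
Proof. intros Ha Hb H u v w ? ? ? ?; apply H; lra. Qed.

Lemma convex_on_ext g g' a b :
  (forall s, a < s < b -> g s = g' s) -> convex_on g' a b -> convex_on g a b.
Proof.
  intros E H u v w H1 H2 H3 H4. unfold slope_mono. rewrite !E by lra. apply H; lra.
Qed.

Lemma convex_R_convex_on g a b : convex_R g -> convex_on g a b.
Proof. intros H u v w _ H1 H2 _. now apply convex_R_slope_mono. Qed.

(* Overlapping triples are split at a point [m] of the overlap [(a2, b1)]. *)
Lemma convex_on_glue g a1 b1 a2 b2 : a2 < b1 ->
  convex_on g a1 b1 -> convex_on g a2 b2 -> convex_on g a1 b2.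
Proof.
  intros Hov C1 C2 u v w Hu Huv Hvw Hw.
  destruct (Rlt_dec w b1) as [Hw1|Hw1]; [apply C1; lra|].
  destruct (Rlt_dec a2 u) as [Hu2|Hu2]; [apply C2; lra|].
  destruct (Rlt_dec a2 v) as [Hv2|Hv2]; [destruct (Rlt_dec v b1) as [Hv1|Hv1]|].
  - apply (slope_mono_split_r g u v ((v + b1) / 2) w); try lra.
    + apply C1; lra.
    + apply C2; lra.
  - set (m := (a2 + b1) / 2).
    apply (slope_mono_split_l g u m v w); unfold m in *; try lra.
    + apply (slope_mono_split_r g u m ((m + b1) / 2) v); unfold m in *; try lra.
      * apply C1; lra.
      * apply C2; lra.
    + apply C2; lra.
  - set (m := (a2 + b1) / 2).
    apply (slope_mono_split_r g u v m w); unfold m in *; try lra.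
    + apply C1; lra.
    + apply (slope_mono_split_l g v ((a2 + m) / 2) m w); unfold m in *; try lra.
      * apply C1; lra.
      * apply C2; lra.
Qed.

Lemma real_induction (P : R -> Prop) a b : a <= b -> P a ->
  (forall s, a <= s <= b -> exists r, r > 0 /\
     forall t u, a <= t <= s -> s - r < t -> t <= u < s + r -> P t -> P u) ->
  P b.
Proof.
  intros Hab Pa Step.
  set (E := fun t => a <= t <= b /\ P t).
  destruct (completeness E) as [s [Hub Hlub]].
  { exists b; intros t [Ht _]; lra. }
  { exists a; split; [lra|exact Pa]. }
  assert (Hs : a <= s <= b).
  { split; [apply Hub; split; [lra|exact Pa]|apply Hlub; intros t [Ht _]; lra]. }
  destruct (Step s Hs) as [r [Hr Hstep]].
  assert (Ht0 : exists t0, E t0 /\ s - r < t0).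
  { apply NNPP; intro N.
    assert (s <= s - r); [|lra].
    apply Hlub; intros t Ht; apply Rnot_lt_le; intro; apply N; exists t; auto. }
  destruct Ht0 as [t0 [[Ht0 Pt0] Hlt]].
  assert (Ht0s : t0 <= s) by (apply Hub; split; auto).
  destruct (Rlt_dec b (s + r)) as [Hb|Hb].
  - apply (Hstep t0); auto; lra.
  - assert (s + r / 2 <= s); [|lra].
    apply Hub; split; [lra|]. apply (Hstep t0); auto; lra.
Qed.

Lemma locally_convex_convex g :
  (forall t, exists e, e > 0 /\ convex_on g (t - e) (t + e)) -> convex_R g.
Proof.
  intros Hloc. apply slope_mono_convex_R. intros u v w Huv Hvw.
  enough (H : convex_on g (u - 1) (w + 1)) by (apply H; lra).
  apply (real_induction (convex_on g (u - 1)) (u - 1)); [lra|intros ? ? ? ? ? ? ?; lra|].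
  intros s _. destruct (Hloc s) as [e [He Cs]].
  exists e; split; auto. intros t t' Ht Hst Ht' Ct.
  apply (convex_on_weaken g (u - 1) (s + e)); try lra.
  apply (convex_on_glue g _ t (s - e)); auto; lra.
Qed.

Lemma convex_R_ext g g' : (forall t, g t = g' t) -> convex_R g -> convex_R g'.
Proof. intros E H s t l Hl. rewrite <- !E. apply H; auto. Qed.

Lemma convex_R_affine g al be : (forall t, g t = al * t + be) -> convex_R g.
Proof. intros E s t l Hl. rewrite !E. right. ring. Qed.

Lemma convex_R_max g h :
  convex_R g -> convex_R h -> convex_R (fun t => Rmax (g t) (h t)).
Proof.
  intros Hg Hh s t l Hl.
  apply Rmax_lub; [eapply Rle_trans; [apply Hg; auto|]|eapply Rle_trans; [apply Hh; auto|]];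
    apply Rplus_le_compat; apply Rmult_le_compat_l; try lra; auto using Rmax_l, Rmax_r.
Qed.

Lemma convex_R_scale g al be :
  0 <= al -> convex_R g -> convex_R (fun t => al * g t + be).
Proof.
  intros Ha H s t l Hl. specialize (H s t l Hl).
  assert (al * g (l * s + (1 - l) * t) <= al * (l * g s + (1 - l) * g t))
    by (apply Rmult_le_compat_l; auto).
  nra.
Qed.

Lemma convex_R_comp_affine g al be :
  convex_R g -> convex_R (fun t => g (al * t + be)).
Proof.
  intros H s t l Hl.
  replace (al * (l * s + (1 - l) * t) + be) with (l * (al * s + be) + (1 - l) * (al * t + be))
    by ring.
  apply H; auto.
Qed.

Lemma convex_R_le_max g s v t :
  convex_R g -> s <= v <= t -> g v <= Rmax (g s) (g t).
Proof.
  intros H Hv. destruct (Req_dec s t) as [<-|Hst].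
  { replace v with s by lra. apply Rmax_l. }
  set (l := (t - v) / (t - s)).
  assert (El : l * (t - s) = t - v) by (unfold l; field; lra).
  assert (Hl : 0 <= l <= 1) by (split; nra).
  specialize (H s t l Hl). replace (l * s + (1 - l) * t) with v in H by nra.
  assert (l * g s <= l * Rmax (g s) (g t)) by (apply Rmult_le_compat_l; [lra|apply Rmax_l]).
  assert ((1 - l) * g t <= (1 - l) * Rmax (g s) (g t))
    by (apply Rmult_le_compat_l; [lra|apply Rmax_r]).
  nra.
Qed.

(* [0] is the convex combination [k/(1+k) * 1 + 1/(1+k) * (-k)]. *)
Lemma convex_R_extrapolate g k U :
  convex_R g -> 0 < k -> g (- k) <= U -> (1 + k) * g 0 - U <= k * g 1.
Proof.
  intros H Hk HU.
  set (l := k / (1 + k)).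
  assert (Hl : 0 <= l <= 1).
  { unfold l; split; [apply Rlt_le, Rdiv_lt_0_compat; lra|].
    apply (Rmult_le_reg_r (1 + k)); [lra|]. field_simplify; lra. }
  specialize (H 1 (- k) l Hl).
  replace (l * 1 + (1 - l) * - k) with 0 in H by (unfold l; field; lra).
  assert (E : (1 + k) * (l * g 1 + (1 - l) * g (- k)) = k * g 1 + g (- k))
    by (unfold l; field; lra).
  assert ((1 + k) * g 0 <= (1 + k) * (l * g 1 + (1 - l) * g (- k)))
    by (apply Rmult_le_compat_l; lra).
  lra.
Qed.

(** * 2+1-convex functions *)

Lemma point_eq (x y z x' y' z' : R) :
  x = x' -> y = y' -> z = z' -> (x, y, z) = (x', y', z') :> point.
Proof. now intros -> -> ->. Qed.

Lemma convex21_max f g :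
  convex21 f -> convex21 g -> convex21 (fun q => Rmax (f q) (g q)).
Proof.
  intros [F1 F2] [G1 G2]; split; intros;
    apply (convex_R_max (fun t => f _) (fun t => g _)); auto.
Qed.

Lemma convex21_scale f al be :
  0 <= al -> convex21 f -> convex21 (fun q => al * f q + be).
Proof.
  intros Ha [F1 F2]; split; intros; apply (convex_R_scale (fun t => f _)); auto.
Qed.

Lemma convex21_const c : convex21 (fun _ => c).
Proof. split; intros; apply (convex_R_affine _ 0 c); intros; ring. Qed.

Lemma convex21_xline f y z : convex21 f -> convex_R (fun t => f (t, y, z)).
Proof.
  intros [H _]. apply (convex_R_ext (fun t => f (0 + t * 1, y + t * 0, z))); [|apply H].
  intros t. f_equal; apply point_eq; ring.
Qed.

Lemma convex21_yline f x z : convex21 f -> convex_R (fun t => f (x, t, z)).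
Proof.
  intros [H _]. apply (convex_R_ext (fun t => f (x + t * 0, 0 + t * 1, z))); [|apply H].
  intros t. f_equal; apply point_eq; ring.
Qed.

Lemma convex21_vline f x y z0 d :
  convex21 f -> convex_R (fun t => f (x, y, z0 + t * d)).
Proof.
  intros [_ H]. apply (convex_R_ext (fun t => f (x, y, 0 + (d * t + z0)))).
  - intros t. f_equal; apply point_eq; ring.
  - apply (convex_R_comp_affine (fun s => f (x, y, 0 + s))), H.
Qed.

Lemma convex21_zline f x y : convex21 f -> convex_R (fun t => f (x, y, t)).
Proof.
  intros H. apply (convex_R_ext (fun t => f (x, y, 0 + t * 1))).
  - intros t. f_equal; apply point_eq; ring.
  - now apply convex21_vline.
Qed.

Definition box (q : point) (r : R) (p : point) : Prop :=
  px q - r < px p < px q + r /\ py q - r < py p < py q + r /\ pz q - r < pz p < pz q + r.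

Definition cbox (q : point) (r : R) (p : point) : Prop :=
  px q - r <= px p <= px q + r /\ py q - r <= py p <= py q + r /\
  pz q - r <= pz p <= pz q + r.

Definition square_max (f : point -> R) (x y z : R) : R :=
  Rmax (Rmax (f (x - 1, y - 1, z)) (f (x + 1, y - 1, z)))
       (Rmax (f (x - 1, y + 1, z)) (f (x + 1, y + 1, z))).

Definition cube_max (f : point -> R) (a : point) : R :=
  Rmax (square_max f (px a) (py a) (pz a - 1)) (square_max f (px a) (py a) (pz a + 1)).

Lemma convex21_le_cube_max f a p : convex21 f -> cbox a 1 p -> f p <= cube_max f a.
Proof.
  destruct a as [[xa ya] za], p as [[x y] z].
  unfold cbox, px, py, pz; simpl; intros Hf [Hx [Hy Hz]].
  assert (Lx : forall y' z', f (x, y', z') <= Rmax (f (xa - 1, y', z')) (f (xa + 1, y', z')))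
    by (intros; apply (convex_R_le_max (fun t => f (t, y', z'))); auto using convex21_xline).
  assert (Ly : forall z', f (x, y, z') <= square_max f xa ya z').
  { intros z'. eapply Rle_trans.
    - apply (convex_R_le_max (fun t => f (x, t, z')) (ya - 1) y (ya + 1));
        auto using convex21_yline.
    - eapply Rle_trans; [apply Rle_max_compat_r, Lx|apply Rle_max_compat_l, Lx]. }
  eapply Rle_trans.
  - apply (convex_R_le_max (fun t => f (x, y, t)) (za - 1) z (za + 1));
      auto using convex21_zline.
  - eapply Rle_trans; [apply Rle_max_compat_r, Ly|apply Rle_max_compat_l, Ly].
Qed.

(* [f] is bounded by [U := cube_max f a] on the unit cube; convexity along the horizontal,
   then the vertical, segment from [p] through [a] and out to distance [k] times as far
   turns this into a lower bound near [a]. *)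
Lemma convex21_lower_bound f a k p : convex21 f -> 1 <= k -> box a (/ k) p ->
  k * (f a - f p) <= 3 * (cube_max f a - f a).
Proof.
  intros Hf Hk Hp.
  set (U := cube_max f a).
  assert (HU : forall p, cbox a 1 p -> f p <= U) by (intros; apply convex21_le_cube_max; auto).
  destruct a as [[xa ya] za], p as [[x y] z].
  unfold box, px, py, pz in Hp; simpl in Hp.
  set (fa := f (xa, ya, za)).
  assert (D0 : fa <= U) by (apply HU; unfold cbox, px, py, pz; simpl; lra).
  assert (Hik : 0 < / k <= 1).
  { split; [apply Rinv_0_lt_compat; lra|rewrite <- Rinv_1; apply Rinv_le_contravar; lra]. }
  assert (Hsmall : forall d, - / k < d < / k -> - 1 <= d * k <= 1).
  { intros d Hd.
    assert (E : / k * k = 1) by (field; lra).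
    assert (d * k < / k * k) by (apply Rmult_lt_compat_r; lra).
    assert (- / k * k < d * k) by (apply Rmult_lt_compat_r; lra).
    lra. }
  set (dx := x - xa). set (dy := y - ya). set (dz := z - za).
  assert (Hdx : - 1 <= dx * k <= 1) by (apply Hsmall; unfold dx; lra).
  assert (Hdy : - 1 <= dy * k <= 1) by (apply Hsmall; unfold dy; lra).
  assert (Hdz : - 1 <= dz * k <= 1) by (apply Hsmall; unfold dz; lra).
  set (f1 := f (x, y, za)).
  assert (Hhor : (1 + k) * fa - U <= k * f1).
  { pose proof (convex_R_extrapolate (fun t => f (xa + t * dx, ya + t * dy, za)) k U) as X.
    simpl in X.
    replace (xa + 0 * dx) with xa in X by ring. replace (ya + 0 * dy) with ya in X by ring.
    replace (xa + 1 * dx) with x in X by (unfold dx; ring).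
    replace (ya + 1 * dy) with y in X by (unfold dy; ring).
    apply X; [apply (proj1 Hf)|lra|].
    apply HU; unfold cbox, px, py, pz; simpl; nra. }
  assert (Hver : (1 + k) * f1 - U <= k * f (x, y, z)).
  { pose proof (convex_R_extrapolate (fun t => f (x, y, za + t * dz)) k U) as X.
    simpl in X.
    replace (za + 0 * dz) with za in X by ring.
    replace (za + 1 * dz) with z in X by (unfold dz; ring).
    apply X; [apply convex21_vline; auto|lra|].
    apply HU; unfold cbox, px, py, pz; simpl; unfold dx, dy in *; nra. }
  assert (k * (k * (fa - f (x, y, z))) <= k * (3 * (U - fa))); [|fold fa; nra].
  assert (k * (k * f (x, y, z)) >= (1 + k) * ((1 + k) * fa - U) - k * U) by nra.
  nra.
Qed.

Lemma convex21_lsc f a e : convex21 f -> e > 0 ->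
  exists r, r > 0 /\ forall p, box a r p -> f a - e < f p.
Proof.
  intros Hf He.
  set (D := cube_max f a - f a).
  set (k := Rmax 1 ((3 * D + 1) / e)).
  assert (Hk1 : 1 <= k) by apply Rmax_l.
  assert (Hke : 3 * D + 1 <= k * e).
  { assert (Hk2 : (3 * D + 1) / e <= k) by apply Rmax_r.
    apply (Rmult_le_compat_r e) in Hk2; [|lra].
    replace ((3 * D + 1) / e * e) with (3 * D + 1) in Hk2 by (field; lra). lra. }
  exists (/ k). split; [apply Rinv_0_lt_compat; lra|].
  intros p Hp. pose proof (convex21_lower_bound f a k p Hf Hk1 Hp) as Hlow.
  change (cube_max f a - f a) with D in Hlow.
  apply Rnot_le_lt. intro Hc. nra.
Qed.

Definition affine21 (f : point -> R) : Prop := convex21 f /\ convex21 (fun q => - f q).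

Lemma affine21_bilinear f A B C D E F :
  (forall q, f q = (A * px q + B * py q + C) * (D * pz q + E) + F) -> affine21 f.
Proof.
  intros Hf; split; split; intros x0 y0; unfold px, py, pz in Hf.
  - intros c a b.
    apply (convex_R_affine _ ((A * a + B * b) * (D * c + E))
      ((A * x0 + B * y0 + C) * (D * c + E) + F)); intros; rewrite Hf; simpl; ring.
  - intros z0.
    apply (convex_R_affine _ ((A * x0 + B * y0 + C) * D)
      ((A * x0 + B * y0 + C) * (D * z0 + E) + F)); intros; rewrite Hf; simpl; ring.
  - intros c a b.
    apply (convex_R_affine _ (- ((A * a + B * b) * (D * c + E)))
      (- ((A * x0 + B * y0 + C) * (D * c + E) + F))); intros; rewrite Hf; simpl; ring.
  - intros z0.
    apply (convex_R_affine _ (- ((A * x0 + B * y0 + C) * D))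
      (- ((A * x0 + B * y0 + C) * (D * z0 + E) + F))); intros; rewrite Hf; simpl; ring.
Qed.

Definition box_continuous (f : point -> R) : Prop :=
  forall q e, e > 0 -> exists r, r > 0 /\ forall p, box q r p -> f q - e < f p < f q + e.

Lemma box_Rmin q r1 r2 p : box q (Rmin r1 r2) p -> box q r1 p /\ box q r2 p.
Proof.
  pose proof (Rmin_l r1 r2). pose proof (Rmin_r r1 r2).
  unfold box; intros; split; lra.
Qed.

Lemma affine21_continuous f : affine21 f -> box_continuous f.
Proof.
  intros [Hf Hnf] q e He.
  destruct (convex21_lsc f q e Hf He) as [r1 [Hr1 L1]].
  destruct (convex21_lsc _ q e Hnf He) as [r2 [Hr2 L2]].
  exists (Rmin r1 r2); split; [apply Rmin_glb_lt; lra|].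
  intros p Hp. apply box_Rmin in Hp as [Hp1 Hp2].
  specialize (L1 p Hp1). specialize (L2 p Hp2). simpl in L2. lra.
Qed.

Definition line_continuous (l : R -> point) : Prop :=
  forall t r, r > 0 -> exists e, e > 0 /\ forall s, t - e < s < t + e -> box (l t) r (l s).

Lemma hline_continuous x0 y0 c a b :
  line_continuous (fun t => (x0 + t * a, y0 + t * b, c)).
Proof.
  intros t r Hr.
  pose proof (Rabs_pos a). pose proof (Rabs_pos b).
  set (e := r / (Rabs a + Rabs b + 1)).
  assert (He : e > 0) by (apply Rdiv_lt_0_compat; lra).
  assert (Ee : e * (Rabs a + Rabs b + 1) = r) by (unfold e; field; lra).
  exists e; split; auto. intros s Hs.
  assert (Hd : Rabs (s - t) < e) by (apply Rabs_def1; lra).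
  assert (Hda : forall d, Rabs d <= Rabs a + Rabs b -> Rabs ((s - t) * d) < r).
  { intros d Hdab. rewrite Rabs_mult. pose proof (Rabs_pos d). pose proof (Rabs_pos (s - t)).
    nra. }
  assert (Ha := Rabs_def2 _ _ (Hda a ltac:(lra))).
  assert (Hb := Rabs_def2 _ _ (Hda b ltac:(lra))).
  unfold box, px, py, pz; simpl. repeat split; lra.
Qed.

Lemma vline_continuous x0 y0 z0 : line_continuous (fun t => (x0, y0, z0 + t)).
Proof.
  intros t r Hr. exists r; split; auto. intros s Hs.
  unfold box, px, py, pz; simpl. repeat split; lra.
Qed.

Definition locally_one_of (f g h : point -> R) : Prop :=
  forall q, exists r, r > 0 /\
    ((forall p, box q r p -> f p = g p) \/ (forall p, box q r p -> f p = h p)).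

Lemma locally_one_of_line_convex f g h l : locally_one_of f g h -> line_continuous l ->
  convex_R (fun t => g (l t)) -> convex_R (fun t => h (l t)) -> convex_R (fun t => f (l t)).
Proof.
  intros Hloc Hl Hg Hh. apply locally_convex_convex. intros t.
  destruct (Hloc (l t)) as [r [Hr Hfr]].
  destruct (Hl t r Hr) as [e [He Hs]].
  exists e; split; auto.
  destruct Hfr as [E|E]; [apply (convex_on_ext _ (fun t => g (l t)))|
    apply (convex_on_ext _ (fun t => h (l t)))]; auto using convex_R_convex_on;
    intros s Hs'; apply E, Hs; lra.
Qed.

Lemma locally_one_of_convex21 f g h :
  locally_one_of f g h -> convex21 g -> convex21 h -> convex21 f.
Proof.
  intros Hloc [G1 G2] [H1 H2]. split.
  - intros x0 y0 c a b.
    apply (locally_one_of_line_convex f g h (fun t => (x0 + t * a, y0 + t * b, c)));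
      auto using hline_continuous.
  - intros x0 y0 z0.
    apply (locally_one_of_line_convex f g h (fun t => (x0, y0, z0 + t)));
      auto using vline_continuous.
Qed.

Definition box_open (O : point -> Prop) : Prop :=
  forall q, O q -> exists r, r > 0 /\ forall p, box q r p -> O p.

Lemma box_open_iff (O O' : point -> Prop) :
  (forall q, O q <-> O' q) -> box_open O' -> box_open O.
Proof.
  intros E H q Hq. apply E in Hq. destruct (H q Hq) as [r [Hr Hp]].
  exists r; split; auto. intros p Hb. apply E; auto.
Qed.

Lemma box_open_and O O' : box_open O -> box_open O' -> box_open (fun q => O q /\ O' q).
Proof.
  intros H H' q [Hq Hq'].
  destruct (H q Hq) as [r [Hr Hp]]. destruct (H' q Hq') as [r' [Hr' Hp']].
  exists (Rmin r r'); split; [apply Rmin_glb_lt; lra|].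
  intros p Hb. apply box_Rmin in Hb as [Hb Hb']. auto.
Qed.

Lemma box_open_or O O' : box_open O -> box_open O' -> box_open (fun q => O q \/ O' q).
Proof.
  intros H H' q [Hq|Hq]; [destruct (H q Hq) as [r [Hr Hp]]|destruct (H' q Hq) as [r [Hr Hp]]];
    exists r; split; auto.
Qed.

Lemma box_open_pos f : affine21 f -> box_open (fun q => 0 < f q).
Proof.
  intros Hf q Hq. destruct (affine21_continuous f Hf q (f q) Hq) as [r [Hr Hp]].
  exists r; split; auto. intros p Hb. specialize (Hp p Hb). lra.
Qed.

Definition patch (O : point -> Prop) (g h : point -> R) (p : point) : R :=
  if excluded_middle_informative (O p) then Rmax (g p) (h p) else h p.

Lemma convex21_patch O g h : box_open O -> convex21 g -> convex21 h -> box_continuous g ->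
  (forall q, ~ O q -> g q < h q \/ exists r, r > 0 /\ forall p, box q r p -> ~ O p) ->
  convex21 (patch O g h).
Proof.
  intros HO Hg Hh Cg Hbd.
  apply (locally_one_of_convex21 _ (fun p => Rmax (g p) (h p)) h);
    auto using convex21_max.
  intros q. unfold patch.
  destruct (classic (O q)) as [Oq|Oq].
  - destruct (HO q Oq) as [r [Hr Hin]]. exists r; split; auto. left.
    intros p Hp. destruct (excluded_middle_informative (O p)); auto. exfalso; auto.
  - destruct (Hbd q Oq) as [Hlt|[r [Hr Hout]]].
    + set (e := (h q - g q) / 2).
      destruct (convex21_lsc h q e Hh ltac:(unfold e; lra)) as [r1 [Hr1 L1]].
      destruct (Cg q e ltac:(unfold e; lra)) as [r2 [Hr2 L2]].
      exists (Rmin r1 r2). split; [apply Rmin_glb_lt; lra|]. right.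
      intros p Hp. apply box_Rmin in Hp as [Hp1 Hp2].
      specialize (L1 p Hp1). specialize (L2 p Hp2).
      destruct (excluded_middle_informative (O p)); auto.
      apply Rmax_right. unfold e in *. lra.
    + exists r; split; auto. right. intros p Hp.
      destruct (excluded_middle_informative (O p)); auto. exfalso; apply (Hout p); auto.
Qed.

(** * Compactness of boxes *)

Section BoxCover.

Variable Q : (point -> Prop) -> Prop.
Hypothesis Q_sub : forall S S', (forall p, S p -> S' p) -> Q S' -> Q S.
Hypothesis Q_union : forall S S', Q S -> Q S' -> Q (fun p => S p \/ S' p).

(* Compactness of [[a, b]] in the coordinate [c], uniformly in the transverse
   neighbourhoods [W r]. *)
Lemma tube_cover (c : point -> R) (W : R -> point -> Prop) a b : a <= b ->
  (forall r r' p, r <= r' -> W r p -> W r' p) ->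
  (forall t, a <= t <= b -> exists r, r > 0 /\ Q (fun p => t - r < c p < t + r /\ W r p)) ->
  exists r, r > 0 /\ Q (fun p => a <= c p <= b /\ W r p).
Proof.
  intros Hab HW Hloc.
  apply (real_induction (fun t => exists r, r > 0 /\ Q (fun p => a <= c p <= t /\ W r p)) a b);
    auto.
  - destruct (Hloc a) as [r [Hr Qr]]; [lra|].
    exists r; split; auto. eapply Q_sub; [|exact Qr]. intros p [Hp Wp]; split; auto; lra.
  - intros s Hs. destruct (Hloc s Hs) as [rs [Hrs Qs]].
    exists rs; split; auto. intros t u Ht Hst Hu [rt [Hrt Qt]].
    exists (Rmin rt rs); split; [apply Rmin_glb_lt; lra|].
    eapply Q_sub; [|exact (Q_union _ _ Qt Qs)].
    intros p [Hp Wp].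
    assert (Wt : W rt p) by (apply (HW (Rmin rt rs)); auto; apply Rmin_l).
    assert (Ws : W rs p) by (apply (HW (Rmin rt rs)); auto; apply Rmin_r).
    destruct (Rle_dec (c p) t); [left|right]; repeat split; auto; lra.
Qed.

Lemma cbox_cover a R0 : 0 <= R0 ->
  (forall q, cbox a R0 q -> exists r, r > 0 /\ Q (box q r)) -> Q (cbox a R0).
Proof.
  intros HR Hloc.
  assert (Lz : forall x y, px a - R0 <= x <= px a + R0 -> py a - R0 <= y <= py a + R0 ->
    exists r, r > 0 /\ Q (fun p => pz a - R0 <= pz p <= pz a + R0 /\
                                   (x - r < px p < x + r /\ y - r < py p < y + r))).
  { intros x y Hx Hy. apply tube_cover; [lra|intros; lra|].
    intros z Hz. destruct (Hloc (x, y, z)) as [r [Hr Qr]].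
    { unfold cbox, px, py, pz in *; simpl; auto. }
    exists r; split; auto. eapply Q_sub; [|exact Qr].
    unfold box, px, py, pz; simpl; intros p; tauto. }
  assert (Ly : forall x, px a - R0 <= x <= px a + R0 ->
    exists r, r > 0 /\ Q (fun p => py a - R0 <= py p <= py a + R0 /\
                            (x - r < px p < x + r /\ pz a - R0 <= pz p <= pz a + R0))).
  { intros x Hx. apply tube_cover; [lra|intros; lra|].
    intros y Hy. destruct (Lz x y Hx Hy) as [r [Hr Qr]].
    exists r; split; auto. eapply Q_sub; [|exact Qr]. intros p; tauto. }
  destruct (tube_cover px (fun _ p => py a - R0 <= py p <= py a + R0 /\
                                      pz a - R0 <= pz p <= pz a + R0)
              (px a - R0) (px a + R0)) as [r [_ Qr]].
  - lra.
  - auto.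
  - intros x Hx. destruct (Ly x Hx) as [r [Hr Qr]].
    exists r; split; auto. eapply Q_sub; [|exact Qr]. intros p; tauto.
  - eapply Q_sub; [|exact Qr]. unfold cbox; intros p; tauto.
Qed.

End BoxCover.

(** * The prism *)

Definition area (P : prism) : R :=
  (fst (vb P) - fst (va P)) * (snd (vc P) - snd (va P))
  - (snd (vb P) - snd (va P)) * (fst (vc P) - fst (va P)).

(* Cramer's rule for the barycentric coordinates at the vertices [vb] and [vc]. *)
Definition bary_b (P : prism) (q : point) : R :=
  ((px q - fst (va P)) * (snd (vc P) - snd (va P))
   - (py q - snd (va P)) * (fst (vc P) - fst (va P))) / area P.

Definition bary_c (P : prism) (q : point) : R :=
  ((fst (vb P) - fst (va P)) * (py q - snd (va P))
   - (snd (vb P) - snd (va P)) * (px q - fst (va P))) / area P.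

Definition bcoord (P : prism) (i : nat) (q : point) : R :=
  match i with
  | O => 1 - bary_b P q - bary_c P q
  | 1%nat => bary_b P q
  | _ => bary_c P q
  end.

Lemma bary_bcoord P q l1 l2 l3 : nondeg P ->
  bary P (px q) (py q) l1 l2 l3 <->
  l1 = bcoord P 0 q /\ l2 = bcoord P 1 q /\ l3 = bcoord P 2 q.
Proof.
  unfold nondeg, bcoord, bary_b, bary_c, area, bary.
  destruct P as [[ax ay] [bx b_y] [cx cy] z1 z2]; simpl.
  set (D := (bx - ax) * (cy - ay) - (b_y - ay) * (cx - ax)); intros HD.
  split.
  - intros [E1 [Ex Ey]].
    assert (E2 : l2 = ((px q - ax) * (cy - ay) - (py q - ay) * (cx - ax)) / D).
    { apply (Rmult_eq_reg_r D); [|exact HD]. unfold D in *.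
      field_simplify; [|exact HD]. rewrite Ex, Ey. replace l1 with (1 - l2 - l3) by lra. ring. }
    assert (E3 : l3 = ((bx - ax) * (py q - ay) - (b_y - ay) * (px q - ax)) / D).
    { apply (Rmult_eq_reg_r D); [|exact HD]. unfold D in *.
      field_simplify; [|exact HD]. rewrite Ex, Ey. replace l1 with (1 - l2 - l3) by lra. ring. }
    rewrite <- E2, <- E3. repeat split; lra.
  - intros [-> [-> ->]]. unfold D in *. split; [ring|split; field; exact HD].
Qed.

Lemma bcoord_affine P i : nondeg P ->
  exists A B C, forall q, bcoord P i q = A * px q + B * py q + C.
Proof.
  unfold nondeg, bcoord, bary_b, bary_c, area.
  destruct P as [[ax ay] [bx b_y] [cx cy] z1 z2]; simpl.
  set (D := (bx - ax) * (cy - ay) - (b_y - ay) * (cx - ax)); intros HD.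
  destruct i as [|[|i]].
  - exists ((b_y - cy) / D), ((cx - bx) / D), ((bx * cy - b_y * cx) / D).
    intros q. unfold D in *. field. exact HD.
  - exists ((cy - ay) / D), ((ax - cx) / D), ((ay * cx - ax * cy) / D).
    intros q. field. exact HD.
  - exists ((ay - b_y) / D), ((bx - ax) / D), ((ax * b_y - ay * bx) / D).
    intros q. field. exact HD.
Qed.

Lemma prism_int_bcoord P q : nondeg P ->
  prism_int P q <->
  (0 < bcoord P 0 q /\ 0 < bcoord P 1 q /\ 0 < bcoord P 2 q) /\ h1 P < pz q < h2 P.
Proof.
  intros ND. unfold prism_int. split.
  - intros [[l1 [l2 [l3 [Hb Hl]]]] Hz].
    apply bary_bcoord in Hb as [-> [-> ->]]; auto.
  - intros [Hl Hz]. split; auto.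
    exists (bcoord P 0 q), (bcoord P 1 q), (bcoord P 2 q).
    split; auto. now apply bary_bcoord.
Qed.

Lemma prism_closed_bcoord P q : nondeg P ->
  prism_closed P q <->
  (0 <= bcoord P 0 q /\ 0 <= bcoord P 1 q /\ 0 <= bcoord P 2 q) /\ h1 P <= pz q <= h2 P.
Proof.
  intros ND. unfold prism_closed. split.
  - intros [[l1 [l2 [l3 [Hb Hl]]]] Hz].
    apply bary_bcoord in Hb as [-> [-> ->]]; auto.
  - intros [Hl Hz]. split; auto.
    exists (bcoord P 0 q), (bcoord P 1 q), (bcoord P 2 q).
    split; auto. now apply bary_bcoord.
Qed.

Lemma vface_bcoord P i q : nondeg P -> vface P i q -> bcoord P i q = 0.
Proof.
  intros ND [[l1 [l2 [l3 [Hb [_ [_ [_ Hi]]]]]]] _].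
  apply bary_bcoord in Hb as [E1 [E2 E3]]; auto.
  destruct Hi as [[-> ->]|[[-> ->]|[-> ->]]]; auto.
Qed.

Lemma affine21_bcoord P i s : nondeg P -> affine21 (fun q => s * bcoord P i q).
Proof.
  intros ND. destruct (bcoord_affine P i ND) as [A [B [C HA]]].
  apply (affine21_bilinear _ (s * A) (s * B) (s * C) 0 1 0).
  intros q. rewrite HA. ring.
Qed.

Lemma affine21_height s c : affine21 (fun q => s * pz q + c).
Proof. apply (affine21_bilinear _ 0 0 1 s c 0). intros q. ring. Qed.

Lemma prism_int_open P : nondeg P -> box_open (prism_int P).
Proof.
  intros ND.
  apply (box_open_iff _ (fun q => (0 < 1 * bcoord P 0 q /\ 0 < 1 * bcoord P 1 q) /\
    (0 < 1 * bcoord P 2 q /\ (0 < 1 * pz q + - h1 P /\ 0 < -1 * pz q + h2 P)))).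
  - intros q. rewrite prism_int_bcoord by auto. lra.
  - repeat apply box_open_and; auto using box_open_pos, affine21_bcoord, affine21_height.
Qed.

Lemma prism_closed_compl_open P : nondeg P -> box_open (fun q => ~ prism_closed P q).
Proof.
  intros ND.
  apply (box_open_iff _ (fun q => (0 < -1 * bcoord P 0 q \/ 0 < -1 * bcoord P 1 q) \/
    (0 < -1 * bcoord P 2 q \/ (0 < -1 * pz q + h1 P \/ 0 < 1 * pz q + - h2 P)))).
  - intros q. rewrite prism_closed_bcoord by auto. split.
    + intros H. apply NNPP; intros H'. apply H. lra.
    + lra.
  - repeat apply box_open_or; auto using box_open_pos, affine21_bcoord, affine21_height.
Qed.

Lemma prism_int_closed P q : prism_int P q -> prism_closed P q.
Proof.
  intros [[l1 [l2 [l3 [Hb Hl]]]] Hz].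
  split; [exists l1, l2, l3; split; auto; lra|lra].
Qed.

Lemma prism_bd_compl_open P : nondeg P -> box_open (fun q => ~ prism_bd P q).
Proof.
  intros ND.
  apply (box_open_iff _ (fun q => prism_int P q \/ ~ prism_closed P q)).
  - intros q. unfold prism_bd. split.
    + intros Hq. destruct (classic (prism_int P q)); auto.
    + intros [Hq|Hq] [Hc Hi]; auto.
  - apply box_open_or; auto using prism_int_open, prism_closed_compl_open.
Qed.

Definition prism_radius (P : prism) : R :=
  Rabs (fst (va P)) + Rabs (snd (va P)) + Rabs (fst (vb P)) + Rabs (snd (vb P))
  + Rabs (fst (vc P)) + Rabs (snd (vc P)) + Rabs (h1 P) + Rabs (h2 P).

Lemma prism_radius_ge0 P : 0 <= prism_radius P.
Proof.
  unfold prism_radius.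
  repeat apply Rplus_le_le_0_compat; apply Rabs_pos.
Qed.

Lemma Rmult_le_Rabs l a : 0 <= l <= 1 -> - Rabs a <= l * a <= Rabs a.
Proof. intros. unfold Rabs. destruct (Rcase_abs a); split; nra. Qed.

Lemma prism_closed_cbox P q : prism_closed P q -> cbox (0, 0, 0) (prism_radius P) q.
Proof.
  intros [[l1 [l2 [l3 [[E [Ex Ey]] [H1 [H2 H3]]]]]] Hz].
  unfold cbox, prism_radius.
  change (px (0, 0, 0)) with 0; change (py (0, 0, 0)) with 0; change (pz (0, 0, 0)) with 0.
  destruct P as [[ax ay] [bx b_y] [cx cy] z1 z2]; simpl in *.
  pose proof (Rmult_le_Rabs l1 ax ltac:(lra)). pose proof (Rmult_le_Rabs l1 ay ltac:(lra)).
  pose proof (Rmult_le_Rabs l2 bx ltac:(lra)). pose proof (Rmult_le_Rabs l2 b_y ltac:(lra)).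
  pose proof (Rmult_le_Rabs l3 cx ltac:(lra)). pose proof (Rmult_le_Rabs l3 cy ltac:(lra)).
  pose proof (Rmult_le_Rabs 1 z1 ltac:(lra)). pose proof (Rmult_le_Rabs 1 z2 ltac:(lra)).
  pose proof (Rabs_pos ax). pose proof (Rabs_pos ay). pose proof (Rabs_pos bx).
  pose proof (Rabs_pos b_y). pose proof (Rabs_pos cx). pose proof (Rabs_pos cy).
  pose proof (Rabs_pos z1). pose proof (Rabs_pos z2).
  repeat split; lra.
Qed.

Lemma list_max_lt (f : point -> R) K c :
  (forall k, In k K -> f k < c) -> exists m, m < c /\ forall k, In k K -> f k <= m.
Proof.
  induction K as [|k K IH]; intros HK.
  - exists (c - 1). split; [lra|intros k []].
  - destruct IH as [m [Hm HmK]]; [intros; apply HK; right; auto|].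
    exists (Rmax (f k) m). split.
    + apply Rmax_lub_lt; auto. apply HK; left; auto.
    + intros k' [<-|Hk']; [apply Rmax_l|eapply Rle_trans; [apply HmK; auto|apply Rmax_r]].
Qed.

Lemma not_rc_hull_separate K q : ~ rc_hull K q ->
  exists F, convex21 F /\ F q = 1 /\ forall k, In k K -> F k <= 0.
Proof.
  intros Hq. apply not_all_ex_not in Hq as [f Hf].
  apply imply_to_and in Hf as [Cf Hf].
  destruct (list_max_lt f K (f q)) as [m [Hm HmK]].
  { intros k Hk. apply Rnot_le_lt. intro. apply Hf. exists k; auto. }
  exists (fun p => / (f q - m) * f p + - m / (f q - m)).
  split; [apply convex21_scale; auto; apply Rlt_le, Rinv_0_lt_compat; lra|split].
  - field. lra.
  - intros k Hk. specialize (HmK k Hk).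
    replace (/ (f q - m) * f k + - m / (f q - m)) with ((f k - m) / (f q - m)) by (field; lra).
    assert (0 < / (f q - m)) by (apply Rinv_0_lt_compat; lra).
    unfold Rdiv. nra.
Qed.

(* Local dominating functions: the constant [0] where [g < 0] or away from [Z], and a
   large multiple of a separating function near points of [Z] outside [K^rc]; compactness
   of [Z] turns them into finitely many, combined by [Rmax]. *)
Lemma convex21_dominate K (Z : point -> Prop) g R0 : 0 <= R0 ->
  (forall q, Z q -> cbox (0, 0, 0) R0 q) -> box_open (fun q => ~ Z q) -> box_continuous g ->
  (forall q, Z q -> 0 <= g q -> ~ rc_hull K q) ->
  exists h, convex21 h /\ (forall k, In k K -> h k <= 0) /\ forall q, Z q -> g q < h q.
Proof.
  intros HR HZb HZo Cg Hsep.
  set (Q := fun S : point -> Prop => exists h, convex21 h /\ (forall k, In k K -> h k <= 0) /\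
              forall p, S p -> Z p -> g p < h p).
  assert (Q0 : forall S, (forall p, S p -> Z p -> g p < 0) -> Q S).
  { intros S HS. exists (fun _ => 0). split; [apply convex21_const|split; auto; intros; lra]. }
  assert (QZ : Q (cbox (0, 0, 0) R0)).
  { apply cbox_cover; auto.
    - intros S S' HS [h [Ch [hK hS]]]. exists h; auto.
    - intros S S' [h [Ch [hK hS]]] [h' [Ch' [hK' hS']]].
      exists (fun p => Rmax (h p) (h' p)). split; [apply convex21_max; auto|split].
      + intros k Hk. apply Rmax_lub; auto.
      + intros p [Hp|Hp] Zp; [eapply Rlt_le_trans; [apply hS|apply Rmax_l]|
          eapply Rlt_le_trans; [apply hS'|apply Rmax_r]]; auto.
    - intros q _. destruct (classic (Z q)) as [Zq|Zq].
      2: { destruct (HZo q Zq) as [r [Hr Hout]]. exists r; split; auto.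
           apply Q0. intros p Hp Zp. exfalso; apply (Hout p); auto. }
      destruct (Rlt_dec (g q) 0) as [Hneg|Hnn].
      { destruct (Cg q (- g q) ltac:(lra)) as [r [Hr Hp]]. exists r; split; auto.
        apply Q0. intros p Hb _. specialize (Hp p Hb). lra. }
      destruct (not_rc_hull_separate K q (Hsep q Zq ltac:(lra))) as [F [CF [Fq FK]]].
      destruct (convex21_lsc F q (1 / 2) CF ltac:(lra)) as [r1 [Hr1 L1]].
      destruct (Cg q 1 ltac:(lra)) as [r2 [Hr2 L2]].
      set (s := 2 * (g q + 1)).
      exists (Rmin r1 r2). split; [apply Rmin_glb_lt; lra|].
      exists (fun p => s * F p + 0). split; [apply convex21_scale; auto; unfold s; lra|split].
      + intros k Hk. specialize (FK k Hk). unfold s. nra.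
      + intros p Hb _. apply box_Rmin in Hb as [Hb1 Hb2].
        specialize (L1 p Hb1). specialize (L2 p Hb2). rewrite Fq in L1. unfold s. nra. }
  destruct QZ as [h [Ch [hK hZ]]]. exists h. auto.
Qed.

Definition height (top : bool) (P : prism) (q : point) : R :=
  if top then h2 P - pz q else pz q - h1 P.

Lemma face_product_affine P i top c : nondeg P ->
  affine21 (fun q => bcoord P i q * height top P q - c).
Proof.
  intros ND. destruct (bcoord_affine P i ND) as [A [B [C HA]]].
  destruct top;
    [apply (affine21_bilinear _ A B C (-1) (h2 P) (- c))|
     apply (affine21_bilinear _ A B C 1 (- h1 P) (- c))];
    intros q; unfold height; rewrite HA; ring.
Qed.

Lemma face_product_pos P i top q : nondeg P -> prism_int P q ->
  0 < bcoord P i q * height top P q.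
Proof.
  intros ND Hq. apply prism_int_bcoord in Hq as [[H0 [H1 H2]] Hz]; auto.
  apply Rmult_lt_0_compat; [destruct i as [|[|i]]; auto|unfold height; destruct top; lra].
Qed.

Lemma face_product_zero P i top q : nondeg P ->
  vface P i q \/ hface P top q -> bcoord P i q * height top P q = 0.
Proof.
  intros ND [Hv|[_ Hz]].
  - rewrite (vface_bcoord P i q ND Hv). ring.
  - unfold height. destruct top; rewrite Hz; ring.
Qed.

Lemma rc_hull_disjoint_prism K M P i top : nondeg P ->
  (forall x, rc_hull K x -> M x) -> (forall k, In k K -> ~ prism_int P k) ->
  (forall q, M q -> prism_bd P q -> vface P i q \/ hface P top q) ->
  forall x, rc_hull K x -> ~ prism_int P x.
Proof.
  intros ND HM HK Hbd x Hx Hint.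
  pose proof (face_product_pos P i top x ND Hint) as Hpos.
  set (c := bcoord P i x * height top P x / 2).
  set (g := fun q => bcoord P i q * height top P q - c).
  assert (Ag : affine21 g) by apply face_product_affine, ND.
  destruct (convex21_dominate K (prism_bd P) g (prism_radius P)) as [h [Ch [hK hbd]]].
  - apply prism_radius_ge0.
  - intros q [Hq _]. now apply prism_closed_cbox.
  - now apply prism_bd_compl_open.
  - now apply affine21_continuous.
  - intros q Hq Hg Hrc. unfold g in Hg.
    rewrite (face_product_zero P i top q ND (Hbd q (HM q Hrc) Hq)) in Hg. unfold c in Hg. lra.
  - assert (Cf : convex21 (patch (prism_int P) g h)).
    { apply convex21_patch; auto using prism_int_open, affine21_continuous; [apply Ag|].
      intros q Hq. destruct (classic (prism_closed P q)) as [Hc|Hc].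
      - left. apply hbd. split; auto.
      - right. destruct (prism_closed_compl_open P ND q Hc) as [r [Hr Hout]].
        exists r; split; auto. intros p Hp Hip. apply (Hout p Hp), prism_int_closed, Hip. }
    destruct (Hx _ Cf) as [k [Hk Hfk]].
    revert Hfk. unfold patch.
    destruct (excluded_middle_informative (prism_int P x)) as [_|]; [|contradiction].
    destruct (excluded_middle_informative (prism_int P k)) as [Hik|_];
      [exfalso; apply (HK k Hk Hik)|].
    specialize (hK k Hk). pose proof (Rmax_l (g x) (h x)). unfold g, c in *. lra.
Qed.

Theorem theorem4p3 (K : list point) (M : point -> Prop) (p : point) (P : prism) :
  (forall x, rc_hull K x -> M x) ->
  M p -> ~ In p K ->
  D_prism M K p P ->
  forall x, rc_hull K x -> M x /\ ~ prism_int P x.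
Proof.
  intros HM _ _ [ND [_ [HK [i [top [_ Hbd]]]]]] x Hx.
  split; [now apply HM|].
  now apply (rc_hull_disjoint_prism K M P i top).
Qed.
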